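(* Let $K$ be a field of characteristic zero, let $(p_n(x))_{n\ge0}$ be a sequence of polynomials in $K[x]$ with $\deg p_n=n$, and let $F^{(y)}:K[x]\to K[x,y]$ be a $K$-linear operator with $F^{(y)}p_n(x)=\sum_{k=0}^np_k(x)p_{n-k}(y)$ for all $n\ge0$. Identify $K[x,y]$ with $K[x]\otimes K[x]$ via $x^iy^j\mapsto x^i\otimes x^j$, and let $\epsilon:K[x]\to K$ be the linear map with $\epsilon p_n=\delta_{n0}$, so that $(K[x],F^{(y)},\epsilon)$ is a coalgebra. Suppose this coalgebra is a bialgebra with respect to the usual multiplication of polynomials. Then there is a constant $c\in K$ such that $F^{(y)}=E^{y-c}$, i.e. $F^{(y)}p(x)=p(x+y-c)$; consequently $(p_n(x))_{n\ge0}$ is a Sheffer sequence; the counit $\epsilon$ is evaluation at $x=c$; and this bialgebra is a Hopf algebra with antipode $\omega:(x-c)^n\mapsto(-1)^n(x-c)^n$.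
   Context: A coalgebra $(V,\Delta,\epsilon)$ has comultiplication $\Delta:V\to V\otimes V$ and counit $\epsilon:V\to K$ satisfying $(I\otimes\Delta)\Delta=(\Delta\otimes I)\Delta$ and $(\epsilon\otimes I)\Delta=I=(I\otimes\epsilon)\Delta$; it is a bialgebra with respect to a multiplication if $\Delta$ and $\epsilon$ are unital algebra homomorphisms. A sequence $(s_n(x))$ with $\deg s_n=n$ is Sheffer if there is a divided power sequence $(q_n)$ (i.e. $\deg q_n=n$ and $q_n(x+y)=\sum_{k}q_k(x)q_{n-k}(y)$) with $s_n(x+y)=\sum_{k=0}^nq_{n-k}(y)s_k(x)$ for all $n$. *)

From HB Require Import structures.
From mathcomp Require Import all_boot all_order all_algebra.
Set Implicit Arguments. Unset Strict Implicit. Unset Printing Implicit Defensive.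
Import Order.TTheory GRing.Theory Num.Theory.
Local Open Scope ring_scope.

(* K[x,y] is represented as {poly {poly K}}: the outer variable is y, the
   coefficients are polynomials in x.  Under x^i y^j <-> x^i (x) x^j this is
   K[x] (x) K[x] with the tensor-product algebra structure. *)

Definition inx (K : fieldType) (q : {poly K}) : {poly {poly K}} := q%:P.
Definition iny (K : fieldType) (q : {poly K}) : {poly {poly K}} := q ^:P.
Definition Xx (K : fieldType) : {poly {poly K}} := inx 'X.
Definition Yy (K : fieldType) : {poly {poly K}} := 'X.
Definition substxy (K : fieldType) (q : {poly K}) (t : {poly {poly K}}) :
  {poly {poly K}} := (map_poly (fun a : K => (a%:P)%:P) q : {poly {poly {poly K}}}).[t].

(* multiplication m : K[x] (x) K[x] -> K[x],  a(x) b(y) |-> a(x) b(x) *)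
Definition mult (K : fieldType) (r : {poly {poly K}}) : {poly K} := r.['X].

(* (w (x) I) on K[x,y]: apply w to the x-part *)
Definition tensL (K : fieldType) (w : {poly K} -> {poly K}) (r : {poly {poly K}})
  : {poly {poly K}} := map_poly w r.
(* (I (x) w) on K[x,y]: apply w to the y-part *)
Definition tensR (K : fieldType) (w : {poly K} -> {poly K}) (r : {poly {poly K}})
  : {poly {poly K}} := \sum_(j < size r) inx r`_j * iny (w 'X^j).

Definition linK (K : fieldType) (f : {poly K} -> K) :=
  forall (a : K) (q r : {poly K}), f (a *: q + r) = a * f q + f r.
Definition linKK (K : fieldType) (f : {poly K} -> {poly K}) :=
  forall (a : K) (q r : {poly K}), f (a *: q + r) = a *: f q + f r.
Definition linKxy (K : fieldType) (f : {poly K} -> {poly {poly K}}) :=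
  forall (a : K) (q r : {poly K}), f (a *: q + r) = inx a%:P * f q + f r.

Definition divided_power (K : fieldType) (q : nat -> {poly K}) :=
  (forall n, size (q n) = n.+1) /\
  forall n, substxy (q n) (Xx K + Yy K) =
            \sum_(k < n.+1) inx (q k) * iny (q (n - k)%N).

Definition sheffer (K : fieldType) (s : nat -> {poly K}) :=
  (forall n, size (s n) = n.+1) /\
  exists q : nat -> {poly K}, divided_power q /\
    forall n, substxy (s n) (Xx K + Yy K) =
              \sum_(k < n.+1) iny (q (n - k)%N) * inx (s k).

(* A linear map out of K[x] that is multiplicative and unital is determined by
   its value on x, so F(q) = q(T) with T := F(x) and eps(q) = q(c) with
   c := eps(x).  Since p_0 = 1 and p_1 has degree one with eps(p_1) = 0, we get
   p_1 = u (x - c), and the coproduct formula for p_1 reads u (T - c) =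
   u (x - c) + u (y - c), i.e. T = x + y - c.  Substituting x + c for x and/or
   y + c for y in the coproduct formula then shows that q_n(x) := p_n(x + c)
   is a divided power sequence with respect to which p is Sheffer, and the
   reflection x |-> 2c - x is an antipode because T(2c - x, x) = T(x, 2c - x) = c. *)

From mathcomp Require Import all_boot all_algebra ring.
Import GRing.Theory.
Set Implicit Arguments. Unset Strict Implicit. Unset Printing Implicit Defensive.
Local Open Scope ring_scope.

Lemma size2_root_XsubC (K : fieldType) (q : {poly K}) (c : K) :
  size q = 2 -> root q c -> q = lead_coef q *: ('X - c%:P).
Proof.
move=> q2 /factor_theorem [r qE]; rewrite qE.
have r0 : r != 0 by apply: contra_eq_neq q2; rewrite qE => ->; rewrite mul0r size_poly0.
have r1 : size r = 1.
  by move: q2; rewrite qE size_mul ?polyXsubC_eq0 // size_XsubC addn2 => -[].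
have -> : r = (r`_0)%:P by apply: size1_polyC; rewrite r1.
by rewrite lead_coefM lead_coefC lead_coefXsubC mulr1 mul_polyC.
Qed.

Section Substitution.

Variable K : fieldType.
Implicit Types (a : K) (q w : {poly K}) (r s t : {poly {poly K}}).

Definition substxy_rmorph t : {rmorphism {poly K} -> {poly {poly K}}} :=
  horner_eval t \o map_poly polyC \o map_poly polyC.

Lemma substxy_rmorphE t q : substxy_rmorph t q = substxy q t.
Proof. by rewrite /= /horner_eval /substxy -map_poly_comp. Qed.

Lemma substxyC a t : substxy a%:P t = (a%:P)%:P.
Proof. by rewrite -substxy_rmorphE /= !map_polyC /horner_eval hornerC. Qed.

Lemma substxyX t : substxy 'X t = t.
Proof. by rewrite -substxy_rmorphE /= !map_polyX /horner_eval hornerX. Qed.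

Lemma substxy_Xx q : substxy q (Xx K) = inx q.
Proof.
rewrite -substxy_rmorphE /= /horner_eval /Xx /inx horner_map.
by rewrite -/(comp_poly 'X q) comp_polyXr.
Qed.

Lemma substxy_Yy q : substxy q (Yy K) = iny q.
Proof. by rewrite -substxy_rmorphE /= /horner_eval -/(comp_poly 'X _) comp_polyXr. Qed.

Lemma substxy_comp q w t : substxy (q \Po w) t = substxy q (substxy w t).
Proof.
rewrite -!substxy_rmorphE /comp_poly -horner_map; congr (_.[_]).
rewrite -map_poly_comp [RHS]/= -map_poly_comp.
by apply: eq_map_poly => a; rewrite /= !map_polyC /horner_eval hornerC.
Qed.

Lemma substxy_XaddC q a t :
  substxy (q \Po ('X + a%:P)) t = substxy q (t + inx a%:P).
Proof.
rewrite substxy_comp; congr substxy.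
by rewrite -substxy_rmorphE rmorphD !substxy_rmorphE substxyX substxyC.
Qed.

Lemma rmorph_substxy (S : nzSemiRingType) (f : {rmorphism {poly {poly K}} -> S}) q t :
  f (substxy q t) = (map_poly (fun a => f (a%:P)%:P) q).[f t].
Proof. by rewrite -horner_map -map_poly_comp. Qed.

Lemma substxy_rmorph_fix (f : {rmorphism {poly {poly K}} -> {poly {poly K}}}) q t :
  (forall a, f (a%:P)%:P = (a%:P)%:P) -> f (substxy q t) = substxy q (f t).
Proof. by move=> fC; rewrite rmorph_substxy (eq_map_poly fC). Qed.

Lemma substxy_rmorph_comp (f : {rmorphism {poly {poly K}} -> {poly K}}) q t w :
  (forall a, f (a%:P)%:P = a%:P) -> f t = w -> f (substxy q t) = q \Po w.
Proof. by move=> fC <-; rewrite rmorph_substxy (eq_map_poly fC). Qed.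

Definition eval2 s t : {rmorphism {poly {poly K}} -> {poly {poly K}}} :=
  horner_eval t \o map_poly (substxy_rmorph s).

Lemma eval2E s t r : eval2 s t r = (map_poly (substxy_rmorph s) r).[t].
Proof. by []. Qed.

Lemma eval2C s t a : eval2 s t (a%:P)%:P = (a%:P)%:P.
Proof. by rewrite eval2E map_polyC hornerC -(substxyC a s); apply: substxy_rmorphE. Qed.

Lemma eval2_substxy s t q r : eval2 s t (substxy q r) = substxy q (eval2 s t r).
Proof. exact/substxy_rmorph_fix/eval2C. Qed.

Lemma eval2_inx s t q : eval2 s t (inx q) = substxy q s.
Proof. by rewrite eval2E map_polyC hornerC; apply: substxy_rmorphE. Qed.

Lemma eval2_iny s t q : eval2 s t (iny q) = substxy q t.
Proof. by rewrite -substxy_Yy eval2_substxy eval2E map_polyX hornerX. Qed.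

Lemma eval2_Xx s t : eval2 s t (Xx K) = s.
Proof. by rewrite eval2_inx substxyX. Qed.

Lemma eval2_Yy s t : eval2 s t (Yy K) = t.
Proof. by rewrite eval2E map_polyX hornerX. Qed.

End Substitution.

Section MultiplicativeLinearMaps.

Variable K : fieldType.

Lemma linKxy_multE (F : {poly K} -> {poly {poly K}}) : linKxy F ->
  F 1 = 1 -> (forall q r, F (q * r) = F q * F r) ->
  forall q, F q = substxy q (F 'X).
Proof.
move=> Flin F1 FM.
have FD q r : F (q + r) = F q + F r.
  by have := Flin 1 q r; rewrite scale1r /inx !polyC1 mul1r.
have F0 : F 0 = 0 by have := FD 0 0; rewrite addr0 -{1}[F 0]addr0 => /addrI.
have FC a : F a%:P = inx a%:P.
  by have := Flin a 1 0; rewrite addr0 F0 addr0 F1 mulr1 alg_polyC.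
elim/poly_ind=> [|q a IHq]; first by rewrite F0 -substxy_rmorphE rmorph0.
rewrite -!substxy_rmorphE rmorphD rmorphM !substxy_rmorphE.
by rewrite FD FM FC IHq substxyX substxyC.
Qed.

Lemma linK_multE (e : {poly K} -> K) : linK e ->
  e 1 = 1 -> (forall q r, e (q * r) = e q * e r) ->
  forall q, e q = q.[e 'X].
Proof.
move=> elin e1 eM.
have eD q r : e (q + r) = e q + e r by have := elin 1 q r; rewrite scale1r mul1r.
have e0 : e 0 = 0 by have := eD 0 0; rewrite addr0 -{1}[e 0]addr0 => /addrI.
have eC a : e a%:P = a.
  by have := elin a 1 0; rewrite addr0 e0 addr0 e1 mulr1 alg_polyC.
elim/poly_ind=> [|q a IHq]; first by rewrite e0 horner0.
by rewrite eD eM eC IHq hornerMXaddC.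
Qed.

End MultiplicativeLinearMaps.

Section TranslatedCoproduct.

Variables (K : fieldType) (c : K) (p : nat -> {poly K}).
Hypothesis hcop : forall n, substxy (p n) (Xx K + Yy K - inx c%:P) =
  \sum_(k < n.+1) inx (p k) * iny (p (n - k)%N).

Lemma coproduct_eval2 s t n : substxy (p n) (s + t - inx c%:P) =
  \sum_(k < n.+1) substxy (p k) s * substxy (p (n - k)%N) t.
Proof.
have := congr1 (eval2 s t) (hcop n).
rewrite eval2_substxy rmorphB rmorphD eval2_Xx eval2_Yy eval2C rmorph_sum => ->.
by apply: eq_bigr => k _; rewrite rmorphM eval2_inx eval2_iny.
Qed.

Lemma sheffer_translated_coproduct :
  (forall n, size (p n) = n.+1) -> sheffer p.
Proof.
move=> hdeg; split=> //.
exists (fun n => p n \Po ('X + c%:P)); split; first split.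
- by move=> n; rewrite size_comp_poly2 ?size_XaddC.
- move=> n; rewrite substxy_XaddC.
  have -> : Xx K + Yy K + inx c%:P =
            (Xx K + inx c%:P) + (Yy K + inx c%:P) - inx c%:P by ring.
  rewrite coproduct_eval2; apply: eq_bigr => k _.
  by rewrite -!substxy_XaddC substxy_Xx substxy_Yy.
- move=> n; have -> : Xx K + Yy K = Xx K + (Yy K + inx c%:P) - inx c%:P by ring.
  rewrite coproduct_eval2; apply: eq_bigr => k _.
  by rewrite -substxy_XaddC substxy_Xx substxy_Yy mulrC.
Qed.

End TranslatedCoproduct.

Section Antipode.

Variable K : fieldType.
Implicit Types (c : K) (q w : {poly K}) (r : {poly {poly K}}).

Definition reflection c : {poly K} := c%:P *+ 2 - 'X.

Lemma linKK_comp_poly w : linKK (comp_poly w).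
Proof. by move=> a q r; rewrite comp_polyD comp_polyZ. Qed.

Lemma XsubC_exp_comp_reflection c n :
  ('X - c%:P) ^+ n \Po reflection c = (-1) ^+ n * ('X - c%:P) ^+ n.
Proof.
rewrite rmorphXn /= comp_polyB comp_polyX comp_polyC -exprNn.
by congr (_ ^+ n); rewrite /reflection; ring.
Qed.

Lemma mult_tensR_comp w r : mult (tensR (comp_poly w) r) = r.[w].
Proof.
rewrite /tensR /mult horner_sum horner_coef; apply: eq_bigr => j _.
rewrite hornerM /inx hornerC rmorphXn /= comp_polyX.
by rewrite /iny -/(comp_poly 'X _) comp_polyXr.
Qed.

Lemma mult_tensL_reflection c q :
  mult (tensL (comp_poly (reflection c)) (substxy q (Xx K + Yy K - inx c%:P))) =
  q.[c]%:P.
Proof.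
pose f : {rmorphism {poly {poly K}} -> {poly K}} :=
  horner_eval 'X \o map_poly (comp_poly (reflection c)).
rewrite -[LHS]/(f (substxy q _)) -comp_polyCr.
apply: substxy_rmorph_comp.
  by move=> a; rewrite /= map_polyC /horner_eval hornerC; apply: comp_polyC.
rewrite /= !rmorphB !rmorphD /= map_polyX !map_polyC /horner_eval /=.
rewrite !(hornerD, hornerN, hornerC, hornerX) comp_polyX comp_polyC /reflection.
ring.
Qed.

Lemma mult_tensR_reflection c q :
  mult (tensR (comp_poly (reflection c)) (substxy q (Xx K + Yy K - inx c%:P))) =
  q.[c]%:P.
Proof.
pose f : {rmorphism {poly {poly K}} -> {poly K}} := horner_eval (reflection c).
rewrite mult_tensR_comp -[LHS]/(f (substxy q _)) -comp_polyCr.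
apply: substxy_rmorph_comp => [a|]; first exact: (hornerC a%:P (reflection c)).
rewrite -[LHS]/(_.[reflection c]) /Xx /Yy /inx.
by rewrite !(hornerD, hornerN, hornerC, hornerX) /reflection; ring.
Qed.

End Antipode.

Section Bialgebra.

Variables (K : fieldType) (p : nat -> {poly K}).
Hypothesis hdeg : forall n, size (p n) = n.+1.
Variable F : {poly K} -> {poly {poly K}}.
Hypotheses (hFlin : linKxy F)
  (hF : forall n, F (p n) = \sum_(k < n.+1) inx (p k) * iny (p (n - k)%N))
  (hF1 : F 1 = 1) (hFM : forall q r, F (q * r) = F q * F r).
Variable eps : {poly K} -> K.
Hypotheses (hepslin : linK eps) (heps : forall n, eps (p n) = (n == 0%N)%:R)
  (heps1 : eps 1 = 1) (hepsM : forall q r, eps (q * r) = eps q * eps r).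

Let epsE := linK_multE hepslin heps1 hepsM.

Lemma p0_eq1 : p 0 = 1.
Proof.
have p0C : p 0 = ((p 0)`_0)%:P by apply: size1_polyC; rewrite hdeg.
by have := heps 0; rewrite epsE p0C hornerC => ->.
Qed.

Lemma F_X : F 'X = Xx K + Yy K - inx (eps 'X)%:P.
Proof.
set c := eps 'X; set u := lead_coef (p 1).
have p1E : p 1 = u *: ('X - c%:P).
  by apply: size2_root_XsubC; rewrite ?hdeg // /root -epsE heps.
have u0 : inx u%:P != 0 by rewrite /inx !polyC_eq0 lead_coef_eq0 -size_poly_eq0 hdeg.
have substxy_p1 t : substxy (p 1) t = inx u%:P * (t - inx c%:P).
  rewrite p1E -mul_polyC -substxy_rmorphE rmorphM rmorphB.
  by rewrite !substxy_rmorphE !substxyC substxyX.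
have := hF 1; rewrite big_ord_recr big_ord1 /= subnn p0_eq1 /inx polyC1 -/(inx _).
rewrite /iny rmorph1 -/(iny _) mul1r mulr1 (linKxy_multE hFlin hF1 hFM).
rewrite -substxy_Xx -substxy_Yy !substxy_p1 -mulrDr => /(mulfI u0) FX.
by rewrite -[F 'X](subrK (inx c%:P)) FX; ring.
Qed.

Lemma F_substxy q : F q = substxy q (Xx K + Yy K - inx (eps 'X)%:P).
Proof. by rewrite (linKxy_multE hFlin hF1 hFM) F_X. Qed.

End Bialgebra.

Theorem corollary2 (K : fieldType) (hchar : [pchar K] =i pred0)
  (p : nat -> {poly K}) (hdeg : forall n, size (p n) = n.+1)
  (F : {poly K} -> {poly {poly K}}) (hFlin : linKxy F)
  (hF : forall n, F (p n) = \sum_(k < n.+1) inx (p k) * iny (p (n - k)%N))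
  (eps : {poly K} -> K) (hepslin : linK eps)
  (heps : forall n, eps (p n) = (n == 0%N)%:R)
  (hF1 : F 1 = 1) (hFM : forall q r, F (q * r) = F q * F r)
  (heps1 : eps 1 = 1) (hepsM : forall q r, eps (q * r) = eps q * eps r) :
  exists c : K,
    [/\ forall q, F q = substxy q (Xx K + Yy K - inx c%:P),
        sheffer p,
        forall q, eps q = q.[c] &
        exists omega : {poly K} -> {poly K},
          [/\ linKK omega,
              forall n : nat, omega (('X - c%:P) ^+ n) = (-1) ^+ n * ('X - c%:P) ^+ n,
              forall q, mult (tensL omega (F q)) = (eps q)%:P &
              forall q, mult (tensR omega (F q)) = (eps q)%:P]].
Proof.
have FE := F_substxy hdeg hFlin hF hF1 hFM hepslin heps heps1 hepsM.
have epsE := linK_multE hepslin heps1 hepsM.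
exists (eps 'X); split=> //.
  by apply: (sheffer_translated_coproduct (c := eps 'X) _ hdeg) => n; rewrite -FE hF.
exists (comp_poly (reflection (eps 'X))); split.
- exact: linKK_comp_poly.
- exact: XsubC_exp_comp_reflection.
- by move=> q; rewrite FE (epsE q) mult_tensL_reflection.
- by move=> q; rewrite FE (epsE q) mult_tensR_reflection.
Qed.
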